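(* If $r\ge 4$ then $\pi\ge\min\{2(n-q-2m),\,3(n-2q-m+1)\}$.
   Context: $G$ is a set of size $n$ and $G(\circ)$, $G(\ast)$ are distinct groups on $G$ with the same identity element. $\mathrm{diff}(\circ,\ast)=\{(a,b):a\circ b\ne a\ast b\}$, $\mathrm{dist}(\circ,\ast)=|\mathrm{diff}(\circ,\ast)|$, $\mathrm{dist}_a=|\{b:a\circ b\ne a\ast b\}|$; $H=\{a:\mathrm{dist}_a=0\}$, $h=|H|$; $K=\{a:\mathrm{dist}_a<n/3\}$, $k=|K|$; $m=\min\{\mathrm{dist}_a:\mathrm{dist}_a>0\}$. Standing assumption: $m\ge 3$. Let $q=\lceil n/3\rceil$ and the profit $\pi=\mathrm{dist}(\circ,\ast)-((k-h)m+(n-k)q)$. Let $R=\{(a,a)\in\mathrm{diff}(\circ,\ast):a\in K\}$, $r=|R|$. *)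

From HB Require Import structures.
From mathcomp Require Import all_boot all_order all_algebra.
Set Implicit Arguments. Unset Strict Implicit. Unset Printing Implicit Defensive.

Definition is_group (T : Type) (mul : T -> T -> T) (e : T) : Prop :=
  [/\ (forall a b c, mul a (mul b c) = mul (mul a b) c),
      (forall a, mul e a = a /\ mul a e = a) &
      (forall a, exists b, mul a b = e /\ mul b a = e)].

Section Dist.
Variables (T : finType) (mul1 mul2 : T -> T -> T).

Definition nG : nat := #|T|.

Definition diffset : {set (T * T)%type} := [set p | mul1 p.1 p.2 != mul2 p.1 p.2].
Definition distG : nat := #|diffset|.
Definition dist_a (a : T) : nat := #|[set b | mul1 a b != mul2 a b]|.
Definition Hset : {set T} := [set a | dist_a a == 0].
Definition hG : nat := #|Hset|.
(* K = {a : dist_a < n/3} (real division), i.e. 3 * dist_a < n; k = |K| *)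
Definition Kset : {set T} := [set a | 3 * dist_a a < nG].
Definition kG : nat := #|Kset|.
(* m = min {dist_a : dist_a > 0}  (the default value nG is never reached
   when the groups differ, and dist_a <= nG anyway) *)
Definition mG : nat := \big[minn/nG]_(a | 0 < dist_a a) dist_a a.
(* q = ceil(n/3) *)
Definition qG : nat := (nG + 2) %/ 3.
Definition profit : int :=
  (distG%:Z - (((kG%:Z - hG%:Z) * mG%:Z) + (nG%:Z - kG%:Z) * qG%:Z))%R.
Definition Rset : {set (T * T)%type} := [set p in diffset | (p.1 == p.2) && (p.1 \in Kset)].
Definition rG : nat := #|Rset|.
End Dist.

(* Charge every element a the share of the subtracted expression it accounts
   for: 0 on H, m on K \ H and q outside K.  Each share is at most dist_a, so
   the profit is the total excess of dist_a over the shares.  Let a0 have the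
   least distance d0 among the r >= 4 elements a of K with a∘a != a*a.  If
   a0∘b = a0*b and a0∘(a0∘b) = a0*(a0∘b), associativity gives
   (a0∘a0)∘b = (a0*a0)*b, so by cancellation u = a0∘a0 and v = a0*a0 both
   disagree at b; the remaining b lie in the diff of a0 or in its preimage
   under a0∘_, whence dist_u, dist_v >= n - 2 d0 > n/3.  So u and v lie outside
   K with excess at least n - 2 d0 - q each, while the r elements contribute
   at least d0 - m each: pi >= 4 (d0 - m) + 2 (n - 2 d0 - q) = 2 (n - q - 2m),
   the first term of the minimum. *)

From mathcomp Require Import all_boot all_order all_algebra.
From mathcomp Require Import zify.
Import Order.TTheory GRing.Theory.

Set Implicit Arguments.
Unset Strict Implicit.

Section GroupCancel.
Variables (T : Type) (mul : T -> T -> T) (e : T).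
Hypothesis mulG : is_group mul e.

Lemma group_mulIr x : injective (mul^~ x).
Proof.
case: mulG => mulA mul1 mulV u v E.
have [y [xy _]] := mulV x.
have : mul (mul u x) y = mul (mul v x) y by rewrite E.
by rewrite -!mulA xy; case: (mul1 u) => _ ->; case: (mul1 v) => _ ->.
Qed.

Lemma group_mulI a : injective (mul a).
Proof.
case: mulG => mulA mul1 mulV x z E.
have [y [_ ya]] := mulV a.
have : mul y (mul a x) = mul y (mul a z) by rewrite E.
by rewrite !mulA ya; case: (mul1 x) => -> _; case: (mul1 z) => -> _.
Qed.

End GroupCancel.

Section Distances.
Variables (T : finType) (mul1 mul2 : T -> T -> T).

Local Notation dist_a := (dist_a mul1 mul2).
Local Notation H := (Hset mul1 mul2).
Local Notation K := (Kset mul1 mul2).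
Local Notation m := (mG mul1 mul2).
Local Notation n := (nG T).
Local Notation q := (qG T).

Lemma distG_sum : distG mul1 mul2 = \sum_a dist_a a.
Proof.
rewrite /distG -sum1_card (eq_bigl (fun p => mul1 p.1 p.2 != mul2 p.1 p.2));
  last by move=> p; rewrite inE.
rewrite -(pair_big_dep predT (fun a b => mul1 a b != mul2 a b) (fun _ _ => 1)).
by apply: eq_bigr => a _; rewrite /dist_a -sum1_card; apply: eq_bigl => b; rewrite inE.
Qed.

Lemma mG_le_dist a : 0 < dist_a a -> m <= dist_a a.
Proof. by move=> da; apply: (@bigmin_le_cond _ nat T n a _ dist_a da). Qed.

Definition share a : nat := if a \in K then (if a \in H then 0 else m) else q.

Lemma share_le_dist a : share a <= dist_a a.
Proof.
rewrite /share; case: ifPn => aK; last by move: aK; rewrite inE -leqNgt /qG; lia.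
by case: ifPn => // aH; apply: mG_le_dist; move: aH; rewrite inE lt0n.
Qed.

Definition excess a : nat := dist_a a - share a.

Lemma excess_out_K a : a \notin K -> excess a = dist_a a - q.
Proof. by move=> /negbTE aK; rewrite /excess /share aK. Qed.

Lemma excess_in_K_minus_H a : a \in K -> 0 < dist_a a -> excess a = dist_a a - m.
Proof.
move=> aK da; have aH : a \notin H by rewrite inE -lt0n.
by rewrite /excess /share aK (negbTE aH).
Qed.

Lemma card_le_dist_twice a w : injective (mul1 a) ->
    (forall b, mul1 a b = mul2 a b -> mul1 a (mul1 a b) = mul2 a (mul1 a b) ->
       mul1 w b != mul2 w b) ->
  n <= dist_a w + 2 * dist_a a.
Proof.
move=> mul1aI misbehave; set Da := [set b | mul1 a b != mul2 a b].
have cover : ~: [set b | mul1 w b != mul2 w b] \subset Da :|: mul1 a @^-1: Da.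
  apply/subsetP => b; rewrite !inE => /negPn /eqP wb.
  apply/contraT; rewrite negb_or !negbK => /andP[/eqP ab /eqP aab].
  by move: (misbehave b ab aab); rewrite wb eqxx.
have := subset_leq_card cover; have := (leq_card_setU Da (mul1 a @^-1: Da)).1.
have := cardsC [set b | mul1 w b != mul2 w b].
by rewrite card_preimset // /dist_a /nG -/Da; lia.
Qed.

Section Squares.
Variable e : T.
Hypotheses (G1 : is_group mul1 e) (G2 : is_group mul2 e).

Lemma card_le_dist_square a : mul1 a a != mul2 a a ->
  n <= dist_a (mul1 a a) + 2 * dist_a a /\ n <= dist_a (mul2 a a) + 2 * dist_a a.
Proof.
case: G1 G2 => mulA1 _ _ [mulA2 _ _] aa.
have mul1aI := group_mulI G1 (a := a).
split; apply: card_le_dist_twice => // b ab aab; apply/eqP => wb.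
- have : mul2 (mul1 a a) b = mul2 (mul2 a a) b by rewrite -wb -mulA1 aab ab mulA2.
  by move/(group_mulIr G2); apply/eqP.
- have : mul1 (mul2 a a) b = mul1 (mul1 a a) b by rewrite wb -mulA2 -ab -aab mulA1.
  by move/(group_mulIr G1)/eqP; rewrite eq_sym; apply/negP.
Qed.

Lemma square_notin_Kset a : a \in K -> mul1 a a != mul2 a a ->
  mul1 a a \notin K /\ mul2 a a \notin K.
Proof.
rewrite !inE -!leqNgt => aK /card_le_dist_square[u_big v_big].
by split; lia.
Qed.

Definition diag_diff : {set T} := [set a in K | mul1 a a != mul2 a a].

Lemma rG_diag_diff : rG mul1 mul2 = #|diag_diff|.
Proof.
have diag_inj : injective (fun a : T => (a, a)) by move=> x y [].
rewrite /rG -[RHS](card_imset _ diag_inj); apply: eq_card => -[x y]; rewrite !inE /=.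
have [<-|xy] := eqVneq x y; first by rewrite (mem_imset _ _ diag_inj) !inE andbC.
rewrite andbF; apply/esym/imsetP => -[a _ [ax ay]].
by move: xy; rewrite ax ay eqxx.
Qed.

Lemma excess_lower_bound : 4 <= rG mul1 mul2 ->
  2 * n <= \sum_a excess a + 2 * q + 4 * m.
Proof.
rewrite rG_diag_diff => D4.
have [a1 a1D] : exists a, a \in diag_diff by apply/card_gt0P; lia.
case: (@arg_minnP _ a1 [in diag_diff] dist_a a1D) => a0 a0D a0_min.
move: (a0D); rewrite inE => /andP[a0K a0a0].
have [u_big v_big] := card_le_dist_square a0a0.
have [uK vK] := square_notin_Kset a0K a0a0.
have d0_gt0 : 0 < dist_a a0 by apply/card_gt0P; exists a0; rewrite inE.
have excess_diag a : a \in diag_diff -> dist_a a0 - m <= excess a.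
  move=> aD; move: (aD); rewrite inE => /andP[aK aa].
  have da : 0 < dist_a a by apply/card_gt0P; exists a; rewrite inE.
  by rewrite excess_in_K_minus_H // leq_sub2r ?a0_min.
have sum_diag : #|diag_diff| * (dist_a a0 - m) <= \sum_(a in diag_diff) excess a.
  by rewrite -sum_nat_const; apply: leq_sum.
have uD : mul1 a0 a0 \notin diag_diff by rewrite inE (negbTE uK).
have vD : mul2 a0 a0 \notin diag_diff by rewrite inE (negbTE vK).
have sum_split : \sum_(a in diag_diff) excess a + excess (mul1 a0 a0)
    + excess (mul2 a0 a0) <= \sum_a excess a.
  rewrite [X in _ <= X](bigID [in diag_diff]) /= -addnA leq_add2l.
  rewrite (bigD1 (mul1 a0 a0)) //= leq_add2l (bigD1 (mul2 a0 a0)) /= ?leq_addr //.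
  by rewrite vD eq_sym a0a0.
have := leq_mul D4 (leqnn (dist_a a0 - m)).
have := mG_le_dist d0_gt0.
move: sum_split; rewrite !excess_out_K //; lia.
Qed.

End Squares.

Section Profit.
Hypothesis n_gt0 : 0 < n.

Lemma Hset_sub_Kset : H \subset K.
Proof. by apply/subsetP => a; rewrite !inE => /eqP ->. Qed.

Lemma sum_share :
  \sum_a share a = (kG mul1 mul2 - hG mul1 mul2) * m + (n - kG mul1 mul2) * q.
Proof.
rewrite (bigID [in K]) /= (bigID [in H]) /= big1; last first.
  by move=> a /andP[_ aH]; rewrite /share (subsetP Hset_sub_Kset a aH) aH.
rewrite add0n (eq_bigr (fun=> m)); last first.
  by move=> a /andP[aK aH]; rewrite /share aK (negbTE aH).
rewrite [\sum_(i | i \notin K) _](eq_bigr (fun=> q)); last first.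
  by move=> a aK; rewrite /share (negbTE aK).
rewrite !sum_nat_const; congr (_ * _ + _ * _).
  have <- : #|K :\: H| = kG mul1 mul2 - hG mul1 mul2.
    by rewrite cardsD (setIidPr Hset_sub_Kset).
  by apply: eq_card => a; rewrite [RHS]inE [RHS]andbC.
by rewrite /nG -(cardsC K) addKn; apply: eq_card => a; rewrite [RHS]inE.
Qed.

Lemma profit_excess : profit mul1 mul2 = Posz (\sum_a excess a).
Proof.
have hk : hG mul1 mul2 <= kG mul1 mul2 by apply: subset_leq_card Hset_sub_Kset.
have kn : kG mul1 mul2 <= n by apply: max_card.
have split_dist : distG mul1 mul2 = \sum_a share a + \sum_a excess a.
  rewrite distG_sum -big_split; apply: eq_bigr => a _.
  by rewrite /= /excess subnKC ?share_le_dist.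
rewrite /profit split_dist sum_share (subzn hk) (subzn kn) -!PoszM.
by rewrite PoszD PoszD addrAC subrr add0r.
Qed.

End Profit.

End Distances.

Theorem lemma9p2 (T : finType) (mul1 mul2 : T -> T -> T) (e : T) :
  is_group mul1 e -> is_group mul2 e -> mul1 <> mul2 ->
  3 <= mG mul1 mul2 ->
  4 <= rG mul1 mul2 ->
  (Order.min (2 * ((nG T)%:Z - (qG T)%:Z - 2 * (mG mul1 mul2)%:Z))
             (3 * ((nG T)%:Z - 2 * (qG T)%:Z - (mG mul1 mul2)%:Z + 1))
   <= profit mul1 mul2)%R.
Proof.
move=> G1 G2 _ _ r4.
have n_gt0 : 0 < nG T by apply/card_gt0P; exists e.
have := excess_lower_bound G1 G2 r4.
by rewrite ge_min (profit_excess mul1 mul2 n_gt0) => excess_big; apply/orP; left; lia.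
Qed.
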